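(* Let $G$ and $G'$ be finitely generated groups, and suppose that one of the following holds: (i) $G$ is a subgroup of $G'$; (ii) $G$ is a quotient of $G'$ (there is a surjective homomorphism $G'\to G$); (iii) $G'$ is the quotient of $G$ by a finite normal subgroup (there is a surjective homomorphism $G\to G'$ with finite kernel). If $G$ has exponential Nielsen growth, then $G'$ has exponential Nielsen growth.
   Context: For a group $G$, a generating $n$-tuple is $(g_1,\dots,g_n)\in G^n$ with $G=\langle g_1,\dots,g_n\rangle$. The product replacement graph $\Gamma_n(G)$ has vertices the generating $n$-tuples, with edges from $(g_1,\dots,g_n)$ to each tuple obtained by replacing $g_j$ by $g_jg_i^{\pm1}$ or $g_i^{\pm1}g_j$, for every ordered pair $i\neq j$. For $S\in\Gamma_n(G)$, $\Gamma_n(G,S)$ is the connected component of $\Gamma_n(G)$ containing $S$. A connected graph has exponential growth if for some vertex $v$ there is $\alpha>1$ such that the number of vertices at distance at most $r$ from $v$ is at least $\alpha^r$ for all sufficiently large $r$. $G$ has exponential Nielsen growth if $\Gamma_n(G,S)$ has exponential growth for some $n$ and some generating $n$-tuple $S$. *)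

From Stdlib Require Import Reals List Arith.
Import ListNotations.
Open Scope R_scope.

Record Group := {
  carrier :> Type;
  gmul : carrier -> carrier -> carrier;
  gone : carrier;
  ginv : carrier -> carrier;
  gmul_assoc : forall x y z, gmul x (gmul y z) = gmul (gmul x y) z;
  gmul_1l : forall x, gmul gone x = x;
  gmul_Vl : forall x, gmul (ginv x) x = gone
}.

Arguments gmul {g}.
Arguments gone {g}.
Arguments ginv {g}.

Definition is_hom (G H : Group) (f : G -> H) : Prop :=
  forall x y, f (gmul x y) = gmul (f x) (f y).

Inductive in_gen {G : Group} (l : list G) : G -> Prop :=
| gen_base : forall x, In x l -> in_gen l x
| gen_one : in_gen l gone
| gen_mul : forall x y, in_gen l x -> in_gen l y -> in_gen l (gmul x y)
| gen_inv : forall x, in_gen l x -> in_gen l (ginv x).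

Definition generates {G : Group} (l : list G) : Prop := forall g, in_gen l g.

Definition finitely_generated (G : Group) : Prop :=
  exists l : list G, generates l.

Definition gen_tuple (G : Group) (n : nat) (S : list G) : Prop :=
  length S = n /\ generates S.

Fixpoint set_nth {A : Type} (l : list A) (j : nat) (a : A) : list A :=
  match l, j with
  | [], _ => []
  | _ :: t, O => a :: t
  | h :: t, S j' => h :: set_nth t j' a
  end.

Definition nielsen_move {G : Group} (n : nat) (S T : list G) : Prop :=
  exists i j, (i < n)%nat /\ (j < n)%nat /\ i <> j /\
    let gi := nth i S gone in
    let gj := nth j S gone in
    (T = set_nth S j (gmul gj gi) \/ T = set_nth S j (gmul gj (ginv gi)) \/
     T = set_nth S j (gmul gi gj) \/ T = set_nth S j (gmul (ginv gi) gj)).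

Definition pr_edge (G : Group) (n : nat) (S T : list G) : Prop :=
  gen_tuple G n S /\ gen_tuple G n T /\ nielsen_move n S T.

Inductive reach_le (G : Group) (n : nat) : nat -> list G -> list G -> Prop :=
| reach_refl : forall r S, reach_le G n r S S
| reach_step : forall r S U T, pr_edge G n S U -> reach_le G n r U T ->
                 reach_le G n (Datatypes.S r) S T.

Definition connected (G : Group) (n : nat) (S T : list G) : Prop :=
  exists r, reach_le G n r S T.

Definition component_exp_growth (G : Group) (n : nat) (S : list G) : Prop :=
  exists v : list G, connected G n S v /\
  exists alpha : R, 1 < alpha /\
  exists r0 : nat, forall r : nat, (r0 <= r)%nat ->
    exists L : list (list G), NoDup L /\
      (forall w, In w L -> reach_le G n r v w) /\
      alpha ^ r <= INR (length L).

Definition exp_nielsen_growth (G : Group) : Prop :=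
  exists n (S : list G), gen_tuple G n S /\ component_exp_growth G n S.

(* Append to every tuple a fixed generating tuple [T] of [G']: the extra entries
   keep every tuple generating, so a homomorphism [f : G -> G'] maps Nielsen paths
   of [Gamma_n(G)] entrywise to Nielsen paths of [Gamma_(n+|T|)(G')], and when
   [f : G' -> G] is onto, Nielsen paths of [Gamma_n(G)] lift along [f].  Balls of
   radius [r] are thus covered by balls of radius [r] with fibres of size at most
   [|ker f|^n] (one for lifts), which keeps their growth exponential. *)

From Stdlib Require Import Reals List Arith Lia Lra ClassicalEpsilon.
Import ListNotations.
Local Open Scope nat_scope.

Section GroupFacts.
Variable G : Group.
Implicit Types x y z : G.

Lemma gmulV x : gmul x (ginv x) = gone.
Proof.
  assert (Hx : gmul (ginv x) (gmul x (ginv x)) = ginv x)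
    by now rewrite gmul_assoc, gmul_Vl, gmul_1l.
  assert (E : gmul (ginv (ginv x)) (gmul (ginv x) (gmul x (ginv x))) = gone)
    by now rewrite Hx, gmul_Vl.
  now rewrite gmul_assoc, gmul_Vl, gmul_1l in E.
Qed.

Lemma gmul1 x : gmul x gone = x.
Proof. now rewrite <- (gmul_Vl G x), gmul_assoc, gmulV, gmul_1l. Qed.

Lemma gmulKV x y : gmul x (gmul (ginv x) y) = y.
Proof. now rewrite gmul_assoc, gmulV, gmul_1l. Qed.

Lemma gmul_cancel_l x y z : gmul x y = gmul x z -> y = z.
Proof.
  intros E. rewrite <- (gmul_1l G y), <- (gmul_1l G z), <- (gmul_Vl G x),
    <- !gmul_assoc, E.
  reflexivity.
Qed.

Lemma gmul_cancel_r x y z : gmul x z = gmul y z -> x = y.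
Proof.
  intros E. rewrite <- (gmul1 x), <- (gmul1 y), <- (gmulV z), !gmul_assoc, E.
  reflexivity.
Qed.

End GroupFacts.

Section HomFacts.
Variables (G H : Group) (f : G -> H).
Hypothesis f_hom : is_hom G H f.

Lemma hom1 : f gone = gone.
Proof.
  apply (gmul_cancel_l H (f gone)).
  now rewrite <- f_hom, gmul_1l, gmul1.
Qed.

Lemma homV x : f (ginv x) = ginv (f x).
Proof.
  apply (gmul_cancel_r H _ _ (f x)).
  now rewrite <- f_hom, !gmul_Vl, hom1.
Qed.

End HomFacts.

Definition nielsen_op {G : Group} (c : nat) (gi gj : G) : G :=
  match c with
  | 0 => gmul gj gi
  | 1 => gmul gj (ginv gi)
  | 2 => gmul gi gj
  | _ => gmul (ginv gi) gj
  end.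

Definition nielsen_step {G : Group} (i j c : nat) (S : list G) : list G :=
  set_nth S j (nielsen_op c (nth i S gone) (nth j S gone)).

Lemma nielsen_moveP {G : Group} n (S T : list G) :
  nielsen_move n S T <->
  exists i j c, i < n /\ j < n /\ i <> j /\ T = nielsen_step i j c S.
Proof.
  split.
  - intros (i & j & Hi & Hj & Hij & [E|[E|[E|E]]]);
      [exists i, j, 0 | exists i, j, 1 | exists i, j, 2 | exists i, j, 3]; auto.
  - intros (i & j & c & Hi & Hj & Hij & ->). exists i, j.
    do 3 (split; [assumption|]).
    destruct c as [|[|[|c]]]; cbn; auto.
Qed.

Lemma length_set_nth {A} (l : list A) j a : length (set_nth l j a) = length l.
Proof. revert j; induction l; intros [|j]; cbn; auto. Qed.

Lemma map_set_nth {A B} (f : A -> B) l j a :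
  map f (set_nth l j a) = set_nth (map f l) j (f a).
Proof. revert j; induction l; intros [|j]; cbn; f_equal; auto. Qed.

Lemma set_nth_app {A} (l l' : list A) j a :
  j < length l -> set_nth (l ++ l') j a = set_nth l j a ++ l'.
Proof.
  revert j; induction l; intros [|j] Hj; cbn in *; try lia; auto.
  rewrite IHl; auto; lia.
Qed.

Lemma length_nielsen_step {G : Group} i j c (S : list G) :
  length (nielsen_step i j c S) = length S.
Proof. apply length_set_nth. Qed.

Lemma nielsen_step_app {G : Group} i j c (S T : list G) :
  i < length S -> j < length S ->
  nielsen_step i j c (S ++ T) = nielsen_step i j c S ++ T.
Proof. intros. unfold nielsen_step. rewrite !app_nth1, set_nth_app; auto. Qed.

Lemma map_nielsen_step (G H : Group) (f : G -> H) (f_hom : is_hom G H f)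
    i j c (S : list G) :
  map f (nielsen_step i j c S) = nielsen_step i j c (map f S).
Proof.
  unfold nielsen_step. rewrite map_set_nth. f_equal.
  rewrite <- (hom1 G H f f_hom), !map_nth.
  destruct c as [|[|[|c]]]; cbn; rewrite f_hom;
    try rewrite (homV G H f f_hom); reflexivity.
Qed.

Lemma generates_app (G : Group) (S T : list G) : generates T -> generates (S ++ T).
Proof.
  intros HT g. induction (HT g);
    [apply gen_base, in_or_app | apply gen_one | apply gen_mul | apply gen_inv]; auto.
Qed.

Lemma gen_tuple_app (G : Group) n (S T : list G) :
  length S = n -> generates T -> gen_tuple G (n + length T) (S ++ T).
Proof. intros HS HT. split; [rewrite length_app; lia | now apply generates_app]. Qed.

Lemma reach_le_gen_tuple (G : Group) n r (S T : list G) :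
  reach_le G n r S T -> gen_tuple G n S -> gen_tuple G n T.
Proof. induction 1 as [|r S U T (_ & HU & _) _ IH]; auto. Qed.

Lemma reach_le_map_app (G H : Group) (f : G -> H) (f_hom : is_hom G H f)
    (T : list H) (HT : generates T) n r (v u : list G) :
  reach_le G n r v u -> length v = n ->
  reach_le H (n + length T) r (map f v ++ T) (map f u ++ T).
Proof.
  induction 1 as [r S|r S U W HSU _ IH]; intros HS; [apply reach_refl|].
  destruct HSU as (_ & [HU _] & Hmove).
  apply nielsen_moveP in Hmove as (i & j & c & Hi & Hj & Hij & ->).
  apply reach_step with (map f (nielsen_step i j c S) ++ T); [|now apply IH].
  split; [|split].
  - apply gen_tuple_app; [rewrite length_map|]; auto.
  - apply gen_tuple_app; [rewrite length_map|]; auto.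
  - apply nielsen_moveP. exists i, j, c. split; [lia|]. split; [lia|]. split; [assumption|].
    rewrite map_nielsen_step, nielsen_step_app; rewrite ?length_map; auto; lia.
Qed.

Lemma reach_le_lift_app (G H : Group) (f : H -> G) (f_hom : is_hom H G f)
    (T : list H) (HT : generates T) n r (v u : list G) :
  reach_le G n r v u -> forall v', length v' = n -> map f v' = v ->
  exists u', map f u' = u /\ reach_le H (n + length T) r (v' ++ T) (u' ++ T).
Proof.
  induction 1 as [r S|r S U W HSU _ IH]; intros v' Hv' <-.
  - exists v'. split; [reflexivity | apply reach_refl].
  - destruct HSU as (_ & _ & Hmove).
    apply nielsen_moveP in Hmove as (i & j & c & Hi & Hj & Hij & ->).
    destruct (IH (nielsen_step i j c v')) as (u' & Hu' & Hreach).
    + now rewrite length_nielsen_step.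
    + now rewrite map_nielsen_step.
    + exists u'. split; [assumption|].
      apply reach_step with (nielsen_step i j c v' ++ T); [|assumption].
      split; [|split].
      * now apply gen_tuple_app.
      * apply gen_tuple_app; [rewrite length_nielsen_step|]; auto.
      * apply nielsen_moveP. exists i, j, c. split; [lia|]. split; [lia|]. split; [assumption|].
        rewrite nielsen_step_app by lia. reflexivity.
Qed.

Fixpoint tuples {A} (K : list A) (n : nat) : list (list A) :=
  match n with
  | 0 => [[]]
  | S n => flat_map (fun a => map (cons a) (tuples K n)) K
  end.

Lemma length_tuples {A} (K : list A) n : length (tuples K n) = length K ^ n.
Proof.
  induction n as [|n IH]; cbn; auto.
  rewrite <- IH. generalize (tuples K n) as X. clear IH. intros X.
  induction K as [|a K IHK]; cbn; auto.
  now rewrite length_app, length_map, IHK.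
Qed.

Lemma in_tuples {A} (K : list A) (l : list A) :
  incl l K -> In l (tuples K (length l)).
Proof.
  induction l as [|a l IH]; intros Hl; cbn; auto.
  apply in_flat_map. exists a. split; [apply Hl; now left|].
  apply in_map, IH. intros x Hx. apply Hl. now right.
Qed.

Fixpoint zip_mul {G : Group} (u k : list G) : list G :=
  match u, k with
  | a :: u, b :: k => gmul a b :: zip_mul u k
  | _, _ => []
  end.

Fixpoint zip_ldiv {G : Group} (u w : list G) : list G :=
  match u, w with
  | a :: u, b :: w => gmul (ginv a) b :: zip_ldiv u w
  | _, _ => []
  end.

Lemma zip_mul_ldiv (G : Group) (u w : list G) :
  length u = length w -> zip_mul u (zip_ldiv u w) = w.
Proof.
  revert w; induction u; intros [|b w] Hl; cbn in *; try lia; auto.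
  rewrite gmulKV, IHu; auto.
Qed.

Lemma length_zip_ldiv (G : Group) (u w : list G) :
  length u = length w -> length (zip_ldiv u w) = length w.
Proof. revert w; induction u; intros [|b w] Hl; cbn in *; try lia; auto. Qed.

Lemma zip_ldiv_ker (G H : Group) (f : G -> H) (f_hom : is_hom G H f) (u w : list G) :
  map f u = map f w -> forall x, In x (zip_ldiv u w) -> f x = gone.
Proof.
  revert w; induction u; intros [|b w] E x Hx; cbn in *; try discriminate; try tauto.
  injection E as Eab E. destruct Hx as [<-|Hx]; eauto.
  now rewrite f_hom, (homV G H f f_hom), Eab, gmul_Vl.
Qed.

Lemma fiber_map_finite_kernel (G H : Group) (f : G -> H) (f_hom : is_hom G H f)
    (K : list G) (HK : forall x, f x = gone -> In x K) (u w : list G) :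
  map f u = map f w -> In w (map (zip_mul u) (tuples K (length w))).
Proof.
  intros E.
  assert (Hlen : length u = length w) by now rewrite <- (length_map f u), E, length_map.
  rewrite <- (zip_mul_ldiv G u w) at 1 by assumption.
  apply in_map. rewrite <- (length_zip_ldiv G u w) by assumption.
  apply in_tuples. intros x Hx. apply HK. eapply zip_ldiv_ker; eauto.
Qed.

Lemma map_lift {A B} (f : A -> B) (P : A -> Prop) (L : list B) :
  (forall b, In b L -> exists a, P a /\ f a = b) ->
  exists La, map f La = L /\ forall a, In a La -> P a.
Proof.
  induction L as [|b L IH]; intros HL.
  - exists []. split; [reflexivity | intros _ []].
  - destruct IH as (La & E & HP); [intros; apply HL; now right|].
    destruct (HL b) as (a & Ha & <-); [now left|].
    exists (a :: La). split; [cbn; congruence|]. intros x [<-|Hx]; auto.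
Qed.

Lemma length_le_fibers {A B} (R : A -> B -> Prop) (c : nat) (L : list A) (L' : list B) :
  NoDup L ->
  (forall u, In u L -> exists u', In u' L' /\ R u u') ->
  (forall u', In u' L' -> exists F, length F <= c /\ forall u, In u L -> R u u' -> In u F) ->
  length L <= length L' * c.
Proof.
  intros HL Hover Hfib.
  assert (Hcover : exists C, length C <= length L' * c /\
            forall u u', In u L -> In u' L' -> R u u' -> In u C).
  { clear Hover. induction L' as [|u' L' IH].
    - exists []. split; [reflexivity | intros _ _ _ []].
    - destruct IH as (C & HC & HinC); [intros; apply Hfib; now right|].
      destruct (Hfib u') as (F & HF & HinF); [now left|].
      exists (F ++ C). split; [cbn; rewrite length_app; lia|].
      intros u v Hu [<-|Hv] Huv; apply in_or_app; eauto. }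
  destruct Hcover as (C & HC & HinC).
  transitivity (length C); [|assumption].
  apply NoDup_incl_length; [assumption|].
  intros u Hu. destruct (Hover u Hu) as (u' & Hu' & Huu'). eauto.
Qed.

Local Open Scope R_scope.

(* Take [beta = sqrt alpha]: [alpha^r <= c m] forces [m >= beta^r] once [beta^r >= c]. *)
Lemma pow_lower_bound_div (alpha : R) (c : nat) : 1 < alpha ->
  exists beta r1, 1 < beta /\ forall r l m, (r1 <= r)%nat ->
    alpha ^ r <= INR l -> (l <= m * c)%nat -> beta ^ r <= INR m.
Proof.
  intros Ha. exists (sqrt alpha).
  assert (Hb : 1 < sqrt alpha) by (rewrite <- sqrt_1; apply sqrt_lt_1; lra).
  destruct (Pow_x_infinity (sqrt alpha)) with (b := INR c) as [N HN].
  { rewrite Rabs_pos_eq; lra. }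
  exists N. split; [assumption|]. intros r l m Hr Hl Hlm.
  specialize (HN r Hr). rewrite Rabs_pos_eq in HN by (apply pow_le; lra).
  apply le_INR in Hlm. rewrite mult_INR in Hlm.
  assert (E : alpha ^ r = sqrt alpha ^ r * sqrt alpha ^ r)
    by (rewrite <- Rpow_mult_distr, sqrt_sqrt; lra).
  assert (Hpos : 0 < sqrt alpha ^ r) by (apply pow_lt; lra).
  pose proof (pos_INR m). pose proof (pos_INR c).
  destruct (Rle_or_lt (sqrt alpha ^ r) (INR m)) as [|Hlt]; [assumption|].
  exfalso. nra.
Qed.

Definition ball_exp_growth (G : Group) (n : nat) (v : list G) : Prop :=
  exists alpha : R, 1 < alpha /\
  exists r0 : nat, forall r : nat, (r0 <= r)%nat ->
    exists L : list (list G), NoDup L /\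
      (forall u, In u L -> reach_le G n r v u) /\
      alpha ^ r <= INR (length L).

Lemma exp_nielsen_growthP (G : Group) :
  exp_nielsen_growth G <-> exists n v, gen_tuple G n v /\ ball_exp_growth G n v.
Proof.
  split.
  - intros (n & S & HS & v & [r Hv] & Hgrowth).
    exists n, v. split; [now apply (reach_le_gen_tuple G n r S) | exact Hgrowth].
  - intros (n & v & Hv & Hgrowth).
    exists n, v. split; [assumption|].
    exists v. split; [exists 0%nat; apply reach_refl | exact Hgrowth].
Qed.

Local Close Scope R_scope.

Lemma ball_exp_growth_transfer (G H : Group) n m (v : list G) (w : list H)
    (R : list G -> list H -> Prop) (c : nat) :
  gen_tuple G n v ->
  (forall r u, reach_le G n r v u -> exists u', reach_le H m r w u' /\ R u u') ->
  (forall u0 u', R u0 u' -> exists F, length F <= c /\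
     forall u, length u = n -> R u u' -> In u F) ->
  ball_exp_growth G n v -> ball_exp_growth H m w.
Proof.
  intros Hv Hcover Hfib (alpha & Halpha & r0 & Hball).
  destruct (pow_lower_bound_div alpha c Halpha) as (beta & r1 & Hbeta & Hbound).
  exists beta. split; [assumption|]. exists (Nat.max r0 r1). intros r Hr.
  destruct (Hball r ltac:(lia)) as (L & HL & HLball & HLsize).
  destruct (map_lift fst (fun p => reach_le H m r w (snd p) /\ R (fst p) (snd p)) L)
    as (Ps & HPs & HPsP).
  { intros u Hu. destruct (Hcover r u (HLball u Hu)) as (u' & Hu' & Huu').
    now exists (u, u'). }
  set (dec := fun x y : list H => excluded_middle_informative (x = y)).
  exists (nodup dec (map snd Ps)). split; [|split].
  - apply NoDup_nodup.
  - intros u' Hu'. apply nodup_In, in_map_iff in Hu' as (p & <- & Hp).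
    now apply HPsP.
  - apply (Hbound r (length L)); [lia | assumption |].
    apply (length_le_fibers R).
    + assumption.
    + intros u Hu. rewrite <- HPs in Hu. apply in_map_iff in Hu as (p & <- & Hp).
      exists (snd p). split; [apply nodup_In, in_map; assumption | now apply HPsP].
    + intros u' Hu'. apply nodup_In, in_map_iff in Hu' as (p & <- & Hp).
      destruct (Hfib (fst p) (snd p)) as (F & HF & HinF); [now apply HPsP|].
      exists F. split; [assumption|]. intros u Hu Hrel. apply HinF; [|assumption].
      apply (reach_le_gen_tuple G n r v u (HLball u Hu) Hv).
Qed.

Lemma ball_exp_growth_hom_finite_kernel (G H : Group) (f : G -> H)
    (f_hom : is_hom G H f) (K : list G) (HK : forall x, f x = gone -> In x K)
    (T : list H) (HT : generates T) n (v : list G) :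
  gen_tuple G n v -> ball_exp_growth G n v ->
  ball_exp_growth H (n + length T) (map f v ++ T).
Proof.
  intros Hv. apply (ball_exp_growth_transfer G H n _ v _
    (fun u u' => u' = map f u ++ T) (length K ^ n) Hv).
  - intros r u Hu. eexists. split; [|reflexivity].
    apply reach_le_map_app; auto. apply Hv.
  - intros u0 u' ->. exists (map (zip_mul u0) (tuples K n)).
    split; [now rewrite length_map, length_tuples|].
    intros u Hu E. apply app_inv_tail in E. subst n.
    now apply (fiber_map_finite_kernel G H f f_hom K HK).
Qed.

Lemma ball_exp_growth_quotient (G H : Group) (f : H -> G) (f_hom : is_hom H G f)
    (v' T : list H) (HT : generates T) n :
  gen_tuple G n (map f v') -> ball_exp_growth G n (map f v') ->
  ball_exp_growth H (n + length T) (v' ++ T).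
Proof.
  intros Hv. apply (ball_exp_growth_transfer G H n _ (map f v') _
    (fun u u' => exists x, u' = x ++ T /\ map f x = u) 1 Hv).
  - intros r u Hu.
    destruct (reach_le_lift_app G H f f_hom T HT n r _ u Hu v') as (u' & Hu' & Hreach).
    + rewrite <- (length_map f). apply Hv.
    + reflexivity.
    + exists (u' ++ T). eauto.
  - intros u0 u' (x0 & -> & Hx0). exists [u0]. split; [reflexivity|].
    intros u _ (x & E & Hx). apply app_inv_tail in E. subst. now left.
Qed.

Theorem proposition3p7 (G G' : Group) :
  finitely_generated G -> finitely_generated G' ->
  ( (* (i) G is (isomorphic to) a subgroup of G' *)
    (exists f : G -> G', is_hom G G' f /\ (forall x y, f x = f y -> x = y))
    \/ (* (ii) G is a quotient of G' *)
    (exists f : G' -> G, is_hom G' G f /\ (forall y, exists x, f x = y))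
    \/ (* (iii) G' is the quotient of G by a finite normal subgroup *)
    (exists f : G -> G', is_hom G G' f /\ (forall y, exists x, f x = y) /\
       exists K : list G, forall x, f x = gone -> In x K) ) ->
  exp_nielsen_growth G -> exp_nielsen_growth G'.
Proof.
  intros _ [T HT] Hcase (n & v & Hv & Hgrowth)%exp_nielsen_growthP.
  apply exp_nielsen_growthP. exists (n + length T).
  destruct Hcase as [(f & f_hom & f_inj) | [(f & f_hom & f_onto) | (f & f_hom & _ & K & HK)]].
  - exists (map f v ++ T). split.
    + apply gen_tuple_app; [rewrite length_map; apply Hv | assumption].
    + apply (ball_exp_growth_hom_finite_kernel G G' f f_hom [gone]); auto.
      intros x Hx. left. apply f_inj. now rewrite Hx, (hom1 G G' f f_hom).
  - destruct (map_lift f (fun _ => True) v) as (v' & <- & _); [firstorder|].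
    exists (v' ++ T). split.
    + apply gen_tuple_app; [rewrite <- (length_map f); apply Hv | assumption].
    + now apply (ball_exp_growth_quotient G G' f f_hom v' T HT n).
  - exists (map f v ++ T). split.
    + apply gen_tuple_app; [rewrite length_map; apply Hv | assumption].
    + now apply (ball_exp_growth_hom_finite_kernel G G' f f_hom K HK).
Qed.
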